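(* Let $N\in\mathbb{N}$, let $\omega_0$ be a centered one-dimensional Gaussian distribution, and let $h$ be the smallest integer with $N\le2^h$. Consider a complete binary tree of depth $h$ (with $2^h$ leaves, ordered left to right), and attach random variables $\alpha_v$ to its nodes as follows: the root's variable is distributed as a sum of $2^h$ independent $\omega_0$-variables; proceeding layer by layer, if $w$ has children $u$ (left) and $v$ (right) and $\alpha_w$ has been sampled with value $a$, where $\alpha_w$ is distributed as a sum of $2^l$ independent $\omega_0$-variables, then $(\alpha_u,\alpha_v)$ is sampled (using fresh independent randomness) from the conditional distribution of $(Y_1,Y_2)$ given $Y_1+Y_2=a$, where $Y_1,Y_2$ are independent and each is a sum of $2^{l-1}$ independent $\omega_0$-variables (so $\alpha_v=a-\alpha_u$). For $x\in\{0,1,\dots,N\}$ let $\alpha^x$ be the sum of the variables attached to the first $x$ leaves. Let $\omega\in\mathbb{R}^N$ have i.i.d. coordinates with distribution $\omega_0$, and let $\pi_1(x)\in\mathbb{R}^N$ be the vector whose first $x$ entries equal $1$ and whose remaining entries equal $0$. Then the joint distribution of $(\alpha^x)_{x=0,1,\dots,N}$ equals the joint distribution of $(\langle\omega,\pi_1(x)\rangle)_{x=0,1,\dots,N}$.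
   Context: All sampling is assumed exact (no simulation bias). *)

From HB Require Import structures.
From mathcomp Require Import all_boot all_order all_algebra.
From mathcomp Require Import all_classical all_reals all_analysis.
Set Implicit Arguments. Unset Strict Implicit. Unset Printing Implicit Defensive.
Import Order.TTheory GRing.Theory Num.Theory.
Import numFieldNormedType.Exports.
Local Open Scope classical_set_scope.
Local Open Scope ring_scope.

Section defs.
Context {R : realType}.

Definition omega0 (sigma : R) : set R -> \bar R := normal_prob 0 sigma.

Definition iid_omega0 {d} {T : measurableType d} (P : probability T R)
    (sigma : R) (n : nat) (Z : 'I_n -> T -> R) : Prop :=
  [/\ (forall i, measurable_fun [set: T] (Z i)),
      (forall i (B : set R), measurable B ->
          P (Z i @^-1` B) = omega0 sigma B) &
      (forall B : 'I_n -> set R, (forall i, measurable (B i)) ->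
          P (\bigcap_(i : 'I_n) (Z i @^-1` B i))
          = (\prod_(i < n) P (Z i @^-1` B i))%E)].

Definition law_of_iid_sum (sigma : R) (k : nat) (mu : set R -> \bar R) : Prop :=
  exists (d : measure_display) (T : measurableType d) (P : probability T R)
         (Z : 'I_k -> T -> R),
    iid_omega0 P sigma Z /\
    forall B : set R, measurable B ->
      mu B = P ((fun t => \sum_(i < k) Z i t) @^-1` B).

Definition is_cond_distr {d} {T : measurableType d} (P : probability T R)
    (S : T -> R) (X : T -> (R * R)%type)
    (K : R -> set (R * R)%type -> \bar R) : Prop :=
  forall (A : set R) (B : set (R * R)%type), measurable A -> measurable B ->
    P (S @^-1` A `&` X @^-1` B) = (\int[P]_(t in S @^-1` A) K (S t) B)%E.

Definition is_split_cond_distr (sigma : R) (m : nat)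
    (K : R -> set (R * R)%type -> \bar R) : Prop :=
  exists (d : measure_display) (T : measurableType d) (P : probability T R)
         (Z : 'I_(m + m) -> T -> R),
    iid_omega0 P sigma Z /\
    let Y1 := fun t => \sum_(i < m + m | (i < m)%N) Z i t in
    let Y2 := fun t => \sum_(i < m + m | (m <= i)%N) Z i t in
    is_cond_distr P (fun t => Y1 t + Y2 t) (fun t => (Y1 t, Y2 t)) K.

(* Binary tree of depth h in heap numbering: root = 1, children of node k
   are 2k (left) and 2k+1 (right); level l consists of nodes 2^l..2^(l+1)-1
   (ordered left to right); the leaves are 2^h + i, i < 2^h.
   [tree_prefix alpha l t] = values of all nodes of levels <= l. *)
Definition tree_prefix {T : Type} (alpha : nat -> T -> R) (l : nat) (t : T)
  : (2 ^ l.+1 - 1).-tuple R :=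
  [tuple alpha i.+1 t | i < 2 ^ l.+1 - 1].

Definition pi1 (N x : nat) : 'I_N -> R := fun i => if (i < x)%N then 1 else 0.

Definition dotN (N : nat) (u v : 'I_N -> R) : R := \sum_(i < N) u i * v i.

End defs.
Arguments pi1 {R} N x.

From HB Require Import structures.
From mathcomp Require Import all_boot all_order all_algebra.
From mathcomp Require Import all_classical all_reals all_analysis.
From mathcomp Require Import measurable_realfun zify.
Import Order.TTheory GRing.Theory Num.Theory.
Import numFieldNormedType.Exports.
Local Open Scope classical_set_scope.
Local Open Scope ring_scope.

(* Level by level, the 2^l values on level l of the tree are independent, each
   distributed as a sum of 2^(h-l) independent omega_0-variables.  The pairs of
   children are drawn independently from the splitting kernel, so by
   independence of the parents the probability of a box factors into integrals
   of the kernel against the law of a parent; such an integral is the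
   probability that the two halves of a sum of independent omega_0-variables
   fall into the two sides of the box, which factors again.  On the leaves this
   says that the leaf values are i.i.d. omega_0, like the coordinates of omega,
   and both (alpha^x)_x and (<omega, pi_1(x)>)_x are the partial sums of these
   vectors.  Joint laws of random vectors are compared on rectangles, which
   generate the product sigma-algebra. *)

Lemma measurable_preimage_setT {d d'} {T : measurableType d} {U : measurableType d'}
    (f : T -> U) A :
  measurable_fun setT f -> measurable A -> measurable (f @^-1` A).
Proof. by move=> mf mA; rewrite -[X in measurable X]setTI; exact: mf. Qed.

Section tuple_rectangles.
Context {R : realType}.
Local Open Scope ereal_scope.

Definition rect {n} (B : 'I_n -> set R) : set (n.-tuple R) :=
  [set t | forall i, B i (tnth t i)].

Definition rects n : set (set (n.-tuple R)) :=
  [set A | exists2 B : 'I_n -> set R, (forall i, measurable (B i)) & A = rect B].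

Lemma measurable_rect n (B : 'I_n -> set R) :
  (forall i, measurable (B i)) -> measurable (rect B).
Proof.
move=> mB; have -> : rect B = \bigcap_(i in [set: 'I_n]) ((@tnth n R)^~ i @^-1` B i).
  by apply/seteqP; split => [t Bt i _|t Bt i]; exact: Bt.
apply: fin_bigcap_measurable => [|i _]; first exact: finite_finset.
by apply: measurable_preimage_setT => //; exact: measurable_tnth.
Qed.

Lemma rect_setT n : rect (fun _ : 'I_n => [set: R]) = [set: n.-tuple R].
Proof. by apply/seteqP; split. Qed.

Lemma measurable_tuple_rects n : measurable = <<s rects n >>.
Proof.
apply/seteqP; split; last first.
  apply: smallest_sub; first exact: sigma_algebra_measurable.
  by move=> _ [B mB ->]; exact: measurable_rect.
apply: smallest_sub; first exact: smallest_sigma_algebra.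
case: n => [|n]; first by rewrite big_ord0.
rewrite -bigcup_mkord_ord => A [i _ [B mB <-]].
apply: sub_sigma_algebra.
exists (fun j : 'I_n.+1 => if j == inord i then B else setT); first by move=> j; case: ifP.
apply/seteqP; split => [t [_ Bt] j|t Ht]; first by case: ifPn => // /eqP ->.
by split => //; have := Ht (inord i); rewrite eqxx.
Qed.

Lemma setI_closed_rects n : setI_closed (rects n).
Proof.
move=> _ _ [B1 mB1 ->] [B2 mB2 ->].
exists (fun i => B1 i `&` B2 i) => [i|]; first exact: measurableI.
by apply/seteqP; split => t; [move=> [B1t B2t] i|move=> Bt; split => i; case: (Bt i)].
Qed.

Lemma measure_tuple_rect_unique n (m1 m2 : {measure set (n.-tuple R) -> \bar R}) :
  m1 setT < +oo ->
  (forall B, (forall i, measurable (B i)) -> m1 (rect B) = m2 (rect B)) ->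
  forall A, measurable A -> m1 A = m2 A.
Proof.
move=> m1_fin m1m2 A mA.
apply: (measure_unique (rects n) (fun=> setT)) => //.
- exact: measurable_tuple_rects.
- exact: setI_closed_rects.
- by move=> _; exists (fun=> setT) => //; rewrite rect_setT.
- by rewrite bigcup_const.
- by move=> _ [B mB ->]; exact: m1m2.
Qed.

End tuple_rectangles.

Section random_vector.
Context {R : realType}.
Local Open Scope ereal_scope.

Definition vec {T : Type} {n} (X : 'I_n -> T -> R) (t : T) : n.-tuple R :=
  [tuple X i t | i < n].

Lemma measurable_vec {d} {T : measurableType d} {n} (X : 'I_n -> T -> R) :
  (forall i, measurable_fun setT (X i)) -> measurable_fun setT (vec X).
Proof.
move=> mX; apply/measurable_fun_tnthP => i.
by rewrite (_ : _ \o _ = X i) //; apply: funext => t /=; rewrite tnth_mktuple.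
Qed.

Lemma preimage_vec_rect {T : Type} n (X : 'I_n -> T -> R) (B : 'I_n -> set R) :
  vec X @^-1` rect B = \bigcap_(i : 'I_n) (X i @^-1` B i).
Proof.
apply/seteqP; split => [t Xt i _|t Xt i]; first by have := Xt i; rewrite tnth_mktuple.
by rewrite tnth_mktuple; exact: Xt.
Qed.

Lemma measure_vec_unique {d1 d2} {T1 : measurableType d1} {T2 : measurableType d2}
    (m1 : {measure set T1 -> \bar R}) (m2 : {measure set T2 -> \bar R}) {n}
    (X1 : 'I_n -> T1 -> R) (X2 : 'I_n -> T2 -> R) :
  (forall i, measurable_fun setT (X1 i)) -> (forall i, measurable_fun setT (X2 i)) ->
  m1 setT < +oo ->
  (forall B, (forall i, measurable (B i)) ->
     m1 (\bigcap_(i : 'I_n) (X1 i @^-1` B i)) = m2 (\bigcap_(i : 'I_n) (X2 i @^-1` B i))) ->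
  forall A, measurable A -> m1 (vec X1 @^-1` A) = m2 (vec X2 @^-1` A).
Proof.
move=> mX1 mX2 m1_fin m1m2 A mA.
change (pushforward m1 (vec X1) A = pushforward m2 (vec X2) A).
apply: (@measure_tuple_rect_unique _ _ (pushforward m1 (vec X1)) (pushforward m2 (vec X2))) => //.
- exact: measurable_vec.
- exact: measurable_vec.
- move=> ? ? B mB; change (m1 (vec X1 @^-1` rect B) = m2 (vec X2 @^-1` rect B)).
  by rewrite !preimage_vec_rect; exact: m1m2.
Qed.

End random_vector.

Section mutual_independence.
Context {R : realType} {d} {T : measurableType d} (P : probability T R).
Local Open Scope ereal_scope.

Definition mutual_indep {n} (X : 'I_n -> T -> R) :=
  forall B : 'I_n -> set R, (forall i, measurable (B i)) ->
    P (\bigcap_(i : 'I_n) (X i @^-1` B i)) = \prod_(i < n) P (X i @^-1` B i).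

Lemma indep_event_vec {n} (X : 'I_n -> T -> R) (E : set T) :
  (forall i, measurable_fun setT (X i)) -> measurable E ->
  (forall B, (forall i, measurable (B i)) ->
     P (vec X @^-1` rect B `&` E) = P E * P (vec X @^-1` rect B)) ->
  forall A, measurable A -> P (vec X @^-1` A `&` E) = P E * P (vec X @^-1` A).
Proof.
move=> mX mE indepE.
(* Both sides are pushforwards by [vec X] of finite measures, namely the
   restriction of P to E and P scaled by P E. *)
have PE_fin : (fine (P E))%:E = P E by rewrite fineK // fin_num_measure.
pose c := NngNum (fine_ge0 (measure_ge0 P E)).
move=> A mA; rewrite -PE_fin.
apply: (measure_vec_unique (mrestr P mE) (mscale c P) X X mX mX) => // [|B mB].
- change (P (setT `&` E) < +oo); rewrite setTI.
  exact: (le_lt_trans (probability_le1 _ _)) (ltry _).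
- change (P (\bigcap_(i : 'I_n) (X i @^-1` B i) `&` E) =
          (fine (P E))%:E * P (\bigcap_(i : 'I_n) (X i @^-1` B i))).
  by rewrite PE_fin -!preimage_vec_rect; exact: indepE.
Qed.

Section blocks.
Context {a b : nat} (X : 'I_(a + b) -> T -> R).
Hypotheses (mX : forall i, measurable_fun setT (X i)) (iX : mutual_indep X).

Let X1 i := X (lshift b i).
Let X2 i := X (rshift a i).

Let indep_blocks_rect B1 B2 :
  (forall i, measurable (B1 i)) -> (forall i, measurable (B2 i)) ->
  P (vec X1 @^-1` rect B1 `&` vec X2 @^-1` rect B2) =
  (\prod_(j < a) P (X1 j @^-1` B1 j)) * \prod_(k < b) P (X2 k @^-1` B2 k).
Proof.
move=> mB1 mB2.
pose C i := match fintype.split i with inl j => B1 j | inr k => B2 k end.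
have -> : vec X1 @^-1` rect B1 `&` vec X2 @^-1` rect B2 =
    \bigcap_(i : 'I_(a + b)) (X i @^-1` C i).
  rewrite !preimage_vec_rect; apply/seteqP; split => [t [X1t X2t] i _|t Xt].
    by rewrite /C; case: split_ordP => [j ->|k ->]; [exact: X1t|exact: X2t].
  split => [j _|k _].
    by have := Xt (lshift b j) I; rewrite /C (@unsplitK a b (inl j)).
  by have := Xt (rshift a k) I; rewrite /C (@unsplitK a b (inr k)).
rewrite iX => [|i]; last by rewrite /C; case: fintype.split.
rewrite big_split_ord /=; congr (_ * _); apply: eq_bigr => i _; rewrite /C.
  by rewrite (@unsplitK a b (inl i)).
by rewrite (@unsplitK a b (inr i)).
Qed.

Lemma mutual_indep_lshift : mutual_indep X1.
Proof.
move=> B mB; rewrite -preimage_vec_rect.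
have := indep_blocks_rect B (fun=> setT) mB (fun=> measurableT).
rewrite rect_setT preimage_setT setIT => ->.
by rewrite [X in _ * X]big1 ?mule1 // => k _; rewrite preimage_setT probability_setT.
Qed.

Lemma mutual_indep_rshift : mutual_indep X2.
Proof.
move=> B mB; rewrite -preimage_vec_rect.
have := indep_blocks_rect (fun=> setT) B (fun=> measurableT) mB.
rewrite rect_setT preimage_setT setTI => ->.
by rewrite [X in X * _]big1 ?mul1e // => k _; rewrite preimage_setT probability_setT.
Qed.

Lemma mutual_indep_blocks A1 A2 : measurable A1 -> measurable A2 ->
  P (vec X1 @^-1` A1 `&` vec X2 @^-1` A2) = P (vec X1 @^-1` A1) * P (vec X2 @^-1` A2).
Proof.
have mV1 : measurable_fun setT (vec X1) by apply: measurable_vec => i; exact: mX.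
have mV2 : measurable_fun setT (vec X2) by apply: measurable_vec => i; exact: mX.
have indep_rect1 B1 : (forall i, measurable (B1 i)) -> forall A, measurable A ->
    P (vec X2 @^-1` A `&` vec X1 @^-1` rect B1) =
    P (vec X1 @^-1` rect B1) * P (vec X2 @^-1` A).
  move=> mB1; apply: indep_event_vec => [i||B2 mB2]; first exact: mX.
  - by apply: measurable_preimage_setT; last exact: measurable_rect.
  - rewrite setIC indep_blocks_rect // !preimage_vec_rect.
    by rewrite mutual_indep_lshift // mutual_indep_rshift.
move=> mA1 mA2; rewrite muleC.
apply: indep_event_vec => [i||B1 mB1|//]; first exact: mX.
- exact: measurable_preimage_setT.
- by rewrite setIC indep_rect1 // muleC.
Qed.

End blocks.

Lemma ge0_integral_indep_mul {d1 d2} {T1 : measurableType d1} {T2 : measurableType d2}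
    (U : T -> T1) (V : T -> T2) :
  measurable_fun setT U -> measurable_fun setT V ->
  (forall A1 A2, measurable A1 -> measurable A2 ->
     P (U @^-1` A1 `&` V @^-1` A2) = P (U @^-1` A1) * P (V @^-1` A2)) ->
  forall (f : T1 -> \bar R) (g : T2 -> \bar R),
  measurable_fun [set: T1] f -> measurable_fun [set: T2] g ->
  (forall x, 0 <= f x) -> (forall y, 0 <= g y) ->
  \int[P]_t (f (U t) * g (V t)) = \int[P]_t f (U t) * \int[P]_t g (V t).
Proof.
move=> mU mV indepUV f g mf mg f0 g0.
pose lawU := distribution P (mfun_Sub (mem_set mU)).
pose lawV := distribution P (mfun_Sub (mem_set mV)).
pose lawUV := distribution P (mfun_Sub (mem_set (measurable_fun_pair mU mV))).
pose F z := f z.1 * g z.2.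
have mF : measurable_fun setT F.
  by apply: emeasurable_funM; apply: measurableT_comp.
have F0 z : 0 <= F z by apply: mule_ge0.
transitivity (\int[lawUV]_z F z); first by rewrite ge0_integral_distribution.
transitivity (\int[lawU \x lawV]_z F z).
  apply: eq_measure_integral => S mS _.
  by apply/esym; apply: product_measure_unique => // A1 A2 mA1 mA2; exact: indepUV.
rewrite fubini_tonelli1 // /fubini_F /F /=.
under eq_integral do rewrite ge0_integralZl //.
by rewrite ge0_integralZr ?integral_ge0 // !ge0_integral_distribution.
Qed.

Lemma emeasurable_fun_prod {d'} {U : measurableType d'} {I : Type} (s : seq I)
    (p : pred I) (f : I -> U -> \bar R) :
  (forall i, measurable_fun setT (f i)) ->
  measurable_fun setT (fun x => \prod_(i <- s | p i) f i x).
Proof.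
move=> mf; elim: s => [|i s IHs].
  by under eq_fun do rewrite big_nil; exact: measurable_cst.
under eq_fun do rewrite big_cons.
by case: (p i) => //; exact: emeasurable_funM.
Qed.

Lemma ge0_integral_indep_prod n (X : 'I_n -> T -> R) :
  (forall i, measurable_fun setT (X i)) -> mutual_indep X ->
  forall f : 'I_n -> R -> \bar R, (forall i, measurable_fun setT (f i)) ->
  (forall i x, 0 <= f i x) ->
  \int[P]_t (\prod_(i < n) f i (X i t)) = \prod_(i < n) \int[P]_t f i (X i t).
Proof.
elim: n X => [|n IHn] X mX iX f mf f0.
  under eq_integral do rewrite big_ord0.
  by rewrite big_ord0 integral_cst // mul1e; exact: probability_setT.
pose Xr i := X (rshift 1 i).
have mXr i : measurable_fun setT (Xr i) by exact: mX.
have liftE (i : 'I_n) : lift ord0 i = rshift 1 i by exact: val_inj.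
pose g (v : n.-tuple R) := \prod_(i < n) f (rshift 1 i) (tnth v i).
have -> : (fun t => \prod_(i < n.+1) f i (X i t)) =
          (fun t => f ord0 (X ord0 t) * g (vec Xr t)).
  apply: funext => t; rewrite big_ord_recl; congr (_ * _).
  by apply: eq_bigr => i _; rewrite tnth_mktuple liftE.
rewrite ge0_integral_indep_mul //.
- rewrite big_ord_recl; congr (_ * _).
  transitivity (\int[P]_t \prod_(i < n) f (rshift 1 i) (Xr i t)).
    by apply: eq_integral => t _; apply: eq_bigr => i _; rewrite tnth_mktuple.
  rewrite (IHn Xr _ _ (fun i => f (rshift 1 i))) //.
  - by apply: eq_bigr => i _; rewrite liftE.
  - exact: mutual_indep_rshift.
- exact: measurable_vec.
- move=> A1 A2 mA1 mA2.
  have lshift0 : lshift n (ord0 : 'I_1) = ord0 by exact: val_inj.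
  have mA1' : measurable ((@tnth 1 R)^~ ord0 @^-1` A1).
    by apply: measurable_preimage_setT => //; exact: measurable_tnth.
  have := mutual_indep_blocks (a:=1) (b:=n) X mX iX _ _ mA1' mA2.
  rewrite (_ : vec _ @^-1` _ = X ord0 @^-1` A1) //.
  by apply/seteqP; split => t /=; rewrite tnth_mktuple lshift0.
- apply: emeasurable_fun_prod => i.
  by apply: measurableT_comp => //; exact: measurable_tnth.
- by move=> v; apply: prode_ge0 => i _.
Qed.

End mutual_independence.

Section iid_sums.
Context {R : realType}.
Local Open Scope ereal_scope.

Definition sumt {k} (v : k.-tuple R) : R := (\sum_(i < k) tnth v i)%R.

Lemma measurable_sumt k : measurable_fun setT (@sumt k).
Proof. by apply: measurable_sum => i; exact: measurable_tnth. Qed.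

Lemma preimage_sum_vec {T : Type} {k} (Z : 'I_k -> T -> R) (C : set R) :
  (fun t => \sum_(i < k) Z i t)%R @^-1` C = vec Z @^-1` (sumt @^-1` C).
Proof.
rewrite (_ : (fun t => _) = sumt \o vec Z) //.
by apply: funext => t; rewrite /= /sumt; apply: eq_bigr => i _; rewrite tnth_mktuple.
Qed.

Lemma iid_omega0_vec_law {d1 d2} {T1 : measurableType d1} {T2 : measurableType d2}
    (P1 : probability T1 R) (P2 : probability T2 R) sigma {k}
    (Z1 : 'I_k -> T1 -> R) (Z2 : 'I_k -> T2 -> R) :
  iid_omega0 P1 sigma Z1 -> iid_omega0 P2 sigma Z2 ->
  forall A, measurable A -> P1 (vec Z1 @^-1` A) = P2 (vec Z2 @^-1` A).
Proof.
move=> [mZ1 law1 indep1] [mZ2 law2 indep2].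
apply: measure_vec_unique => // [|B mB].
- exact: (le_lt_trans (probability_le1 _ _)) (ltry _).
- change (P1 (\bigcap_(i : 'I_k) (Z1 i @^-1` B i)) = P2 (\bigcap_(i : 'I_k) (Z2 i @^-1` B i))).
  rewrite indep1 // indep2 //; apply: eq_bigr => i _.
  exact: etrans (law1 i _ (mB i)) (esym (law2 i _ (mB i))).
Qed.

Lemma law_of_iid_sumE {sigma : R} {k mu} {d} {T : measurableType d}
    {P : probability T R} {Z : 'I_k -> T -> R} :
  law_of_iid_sum sigma k mu -> iid_omega0 P sigma Z -> forall C, measurable C ->
  mu C = P ((fun t => \sum_(i < k) Z i t)%R @^-1` C).
Proof.
move=> [d0 [T0 [P0 [Z0 [iidZ0 muE]]]]] iidZ C mC.
have mC' : measurable (@sumt k @^-1` C).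
  exact: measurable_preimage_setT (measurable_sumt k) mC.
rewrite (muE C mC) (preimage_sum_vec Z0) (preimage_sum_vec Z).
exact: (iid_omega0_vec_law P0 P sigma Z0 Z iidZ0 iidZ _ mC').
Qed.

Lemma law_of_iid_sum_setT {sigma : R} {k mu} : law_of_iid_sum sigma k mu -> mu setT = 1.
Proof.
move=> [d0 [T0 [P0 [Z0 [_ muE]]]]].
by rewrite muE // preimage_setT; exact: probability_setT.
Qed.

Lemma law_of_iid_sum1 {sigma : R} {mu} : law_of_iid_sum sigma 1 mu ->
  forall C, measurable C -> mu C = omega0 sigma C.
Proof.
move=> [d0 [T0 [P0 [Z0 [[_ lawZ0 _] muE]]]]] C mC.
rewrite muE // (_ : (fun t => _) = Z0 ord0); first exact: lawZ0.
by apply: funext => t; rewrite big_ord1.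
Qed.

Lemma iid_omega0_lshift {d} {T : measurableType d} {P : probability T R} {sigma : R}
    {a b} {Z : 'I_(a + b) -> T -> R} :
  iid_omega0 P sigma Z -> iid_omega0 P sigma (fun i => Z (lshift b i)).
Proof.
case=> mZ lawZ indepZ; split => [i|i|]; [exact: mZ|exact: lawZ|exact: mutual_indep_lshift].
Qed.

Lemma iid_omega0_rshift {d} {T : measurableType d} {P : probability T R} {sigma : R}
    {a b} {Z : 'I_(a + b) -> T -> R} :
  iid_omega0 P sigma Z -> iid_omega0 P sigma (fun i => Z (rshift a i)).
Proof.
case=> mZ lawZ indepZ; split => [i|i|]; [exact: mZ|exact: lawZ|exact: mutual_indep_rshift].
Qed.

Lemma big_ord_add_ltn {V : nmodType} m n (F : 'I_(m + n) -> V) :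
  (\sum_(i < m + n | (i < m)%N) F i = \sum_(i < m) F (lshift n i))%R.
Proof.
rewrite big_split_ord /= [X in (_ + X)%R]big_pred0 ?addr0.
  by apply: eq_bigl => i; rewrite ltn_ord.
by move=> i /=; rewrite ltnNge leq_addr.
Qed.

Lemma big_ord_add_geq {V : nmodType} m n (F : 'I_(m + n) -> V) :
  (\sum_(i < m + n | (m <= i)%N) F i = \sum_(i < n) F (rshift m i))%R.
Proof.
rewrite big_split_ord /= [X in (X + _)%R]big_pred0 ?add0r.
  by apply: eq_bigl => i; rewrite leq_addr.
by move=> i /=; rewrite leqNgt ltn_ord.
Qed.

End iid_sums.

Lemma ge0_integral_eq_law {R : realType} {d1 d2 d'} {T1 : measurableType d1}
    {T2 : measurableType d2} {U : measurableType d'}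
    (P1 : probability T1 R) (P2 : probability T2 R) (X1 : T1 -> U) (X2 : T2 -> U) :
  measurable_fun setT X1 -> measurable_fun setT X2 ->
  (forall C, measurable C -> P1 (X1 @^-1` C) = P2 (X2 @^-1` C)) ->
  forall f : U -> \bar R, measurable_fun setT f -> (forall x, (0 <= f x)%E) ->
  (\int[P1]_t f (X1 t) = \int[P2]_t f (X2 t))%E.
Proof.
move=> mX1 mX2 lawX f mf f0.
rewrite -(ge0_integral_distribution (mfun_Sub (mem_set mX1))) //.
rewrite -(ge0_integral_distribution (mfun_Sub (mem_set mX2))) //.
by apply: eq_measure_integral => C mC _; exact: lawX.
Qed.

Section split_cond_distr.
Context {R : realType}.
Local Open Scope ereal_scope.

Lemma split_cond_distr_half_law {sigma : R} {m} {K : R -> set (R * R) -> \bar R} :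
  is_split_cond_distr sigma m K -> exists mu, law_of_iid_sum sigma m mu.
Proof.
move=> split_K; have [dW [TW [PW [Z [iidZ _]]]]] := split_K.
exists (fun C => PW ((fun t => \sum_(i < m) Z (lshift m i) t)%R @^-1` C)).
by exists dW, TW, PW, (fun i => Z (lshift m i)); split => //; exact: iid_omega0_lshift.
Qed.

Lemma integral_split_cond_distr {sigma : R} {m} {K : R.-ker R ~> (R * R)%type} {mu mu'}
    {d} {T : measurableType d} {P : probability T R} {X : T -> R} :
  is_split_cond_distr sigma m (fun a B => K a B) ->
  law_of_iid_sum sigma (m + m) mu -> law_of_iid_sum sigma m mu' ->
  measurable_fun setT X -> (forall C, measurable C -> P (X @^-1` C) = mu C) ->
  forall B1 B2, measurable B1 -> measurable B2 ->
  \int[P]_t K (X t) (B1 `*` B2) = mu' B1 * mu' B2.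
Proof.
move=> split_K lawmu lawmu' mX lawX B1 B2 mB1 mB2.
(* X and the sum Z_0 + ... + Z_(2m-1) both have law mu, so the integral can be
   computed on the space of Z, where it is the probability that the two half
   sums fall into B1 and B2. *)
have [dW [TW [PW [Z [iidZ condK]]]]] := split_K.
have [mZ _ indepZ] := iidZ.
pose Y1 t := (\sum_(i < m) Z (lshift m i) t)%R.
pose Y2 t := (\sum_(i < m) Z (rshift m i) t)%R.
have Y1E : (fun t => \sum_(i < m + m | (i < m)%N) Z i t)%R = Y1.
  by apply: funext => t; exact: big_ord_add_ltn.
have Y2E : (fun t => \sum_(i < m + m | (m <= i)%N) Z i t)%R = Y2.
  by apply: funext => t; exact: big_ord_add_geq.
have SE : (fun t => Y1 t + Y2 t)%R = (fun t => \sum_(i < m + m) Z i t)%R.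
  by apply: funext => t; rewrite big_split_ord.
move: condK; rewrite Y1E Y2E /= SE => condK.
transitivity (\int[PW]_w K (\sum_(i < m + m) Z i w)%R (B1 `*` B2)).
  apply: (ge0_integral_eq_law P PW X _ mX _ _ (fun a => K a (B1 `*` B2))).
  - exact: measurable_sum.
  - by move=> C mC; rewrite lawX // (law_of_iid_sumE lawmu iidZ).
  - exact: measurable_kernel (measurableX mB1 mB2).
  - by move=> a; exact: measure_ge0.
have := condK setT (B1 `*` B2) measurableT (measurableX mB1 mB2).
rewrite preimage_setT setTI => <-.
change (PW (Y1 @^-1` B1 `&` Y2 @^-1` B2) = mu' B1 * mu' B2).
have mS C : measurable C -> measurable (@sumt R m @^-1` C).
  exact: measurable_preimage_setT (measurable_sumt m).
rewrite /Y1 /Y2 (preimage_sum_vec (fun i => Z (lshift m i))).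
rewrite (preimage_sum_vec (fun i => Z (rshift m i))).
rewrite (mutual_indep_blocks PW Z mZ indepZ _ _ (mS B1 mB1) (mS B2 mB2)).
rewrite -(preimage_sum_vec (fun i => Z (lshift m i))).
rewrite -(preimage_sum_vec (fun i => Z (rshift m i))).
rewrite -(law_of_iid_sumE lawmu' (iid_omega0_lshift iidZ) B1 mB1).
by rewrite -(law_of_iid_sumE lawmu' (iid_omega0_rshift iidZ) B2 mB2).
Qed.

End split_cond_distr.

Section iid_law.
Context {R : realType} {d} {T : measurableType d} (P : probability T R).
Local Open Scope ereal_scope.

(* Indexed by nat, so that the nodes 2^l + j of a tree level need no ordinal
   arithmetic; only X 0, ..., X (n-1) matter. *)
Definition iid_law n (X : nat -> T -> R) (mu : set R -> \bar R) :=
  forall B : nat -> set R, (forall k, measurable (B k)) ->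
    P (\bigcap_(j in `I_n) (X j @^-1` B j)) = \prod_(0 <= j < n) mu (B j).

Context {n : nat} {X : nat -> T -> R} {mu : set R -> \bar R}.
Hypotheses (iidX : iid_law n X mu) (mu_setT : mu setT = 1).

Lemma iid_law_ord (B : 'I_n -> set R) : (forall i, measurable (B i)) ->
  P (\bigcap_(j : 'I_n) (X j @^-1` B j)) = \prod_(j < n) mu (B j).
Proof.
move=> mB; pose Bn k := oapp B setT (insub k : option 'I_n).
have mBn k : measurable (Bn k) by rewrite /Bn; case: insub => [u|]; [exact: mB|exact: measurableT].
have := iidX Bn mBn; rewrite big_mkord.
under eq_bigr do rewrite /Bn valK.
move=> <-; congr (P _); apply/seteqP; split => [t Xt k /= kn|t Xt j _].
  by rewrite /Bn; case: insubP => [u _ <-|/negP] //=; exact: Xt.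
by have := Xt j (ltn_ord j); rewrite /Bn valK.
Qed.

Lemma iid_law_marginal (j : 'I_n) C : measurable C -> P (X j @^-1` C) = mu C.
Proof.
move=> mC; have := iid_law_ord (fun i => if i == j then C else setT).
rewrite (bigD1 j) //= eqxx big1 => [|i /negbTE -> //].
rewrite mule1 => <- => [|i]; last by case: ifP.
congr (P _); apply/seteqP; split => [t Xt i _|t Xt]; first by case: ifPn => [/eqP ->|].
by have := Xt j I; rewrite eqxx.
Qed.

Lemma iid_law_mutual_indep : mutual_indep P (fun j : 'I_n => X j).
Proof.
move=> B mB; rewrite iid_law_ord //.
by apply: eq_bigr => i _; rewrite iid_law_marginal.
Qed.

Lemma iid_law_prefix k : (k <= n)%N -> iid_law k X mu.
Proof.
move=> kn B mB.
pose Bk j := if (j < k)%N then B j else setT.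
have mBk j : measurable (Bk j) by rewrite /Bk; case: ifP => _; [exact: mB|exact: measurableT].
have := iidX Bk mBk.
rewrite (big_cat_nat (leq0n k) kn) /= [X in _ * X]big_nat_cond [X in _ * X]big1; last first.
  by move=> j /andP[/andP[kj _] _]; rewrite /Bk ltnNge kj.
rewrite mule1 (@eq_big_nat _ _ _ 0 k _ (fun j => mu (B j))) => [<-|j /andP[_ jk]]; last first.
  by rewrite /Bk jk.
congr (P _); apply/seteqP; split => [t Xt j /= jn|t Xt j /= jk].
  by rewrite /Bk; case: ifPn => // jk; exact: Xt.
by have := Xt j (leq_trans jk kn); rewrite /Bk /= jk.
Qed.

End iid_law.

Lemma big_nat_double {T : Type} {idx : T} (op : Monoid.law idx) (F : nat -> T) k :
  \big[op/idx]_(0 <= i < k.*2) F i = \big[op/idx]_(0 <= j < k) op (F j.*2) (F j.*2.+1).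
Proof.
elim: k => [|k IHk]; first by rewrite !big_geq.
by rewrite doubleS !big_nat_recr //= IHk Monoid.mulmA.
Qed.

Lemma bigcap_preimage_pairs {T U : Type} (Y : nat -> T -> U) (B : nat -> set U) n :
  \bigcap_(i in `I_(n.*2)) (Y i @^-1` B i) =
  \bigcap_(j : 'I_n) ((fun t => (Y j.*2 t, Y j.*2.+1 t)) @^-1` (B j.*2 `*` B j.*2.+1)).
Proof.
apply/seteqP; split => [t Yt j _|t Yt i /= ilt].
  by split; apply: Yt => /=; rewrite ?ltn_double ?ltn_Sdouble.
have ilt' : (i./2 < n)%N by rewrite ltn_half_double.
have [/= Y1 Y2] := Yt (Ordinal ilt') I.
by rewrite -(odd_double_half i); case: (odd i).
Qed.

Section iid_law_levels.
Context {R : realType} {d} {T : measurableType d} (P : probability T R).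
Local Open Scope ereal_scope.

Lemma iid_law1 (X : nat -> T -> R) : iid_law P 1 X (fun C => P (X 0%N @^-1` C)).
Proof.
move=> B mB; rewrite big_nat1; congr (P _).
apply/seteqP; split => [t Xt|t Xt j /= j1]; first exact: Xt.
by have -> : j = 0%N by lia.
Qed.

Lemma iid_law_iid_omega0 {sigma : R} {mu n} {X : nat -> T -> R} :
  law_of_iid_sum sigma 1 mu -> (forall j : 'I_n, measurable_fun setT (X j)) ->
  iid_law P n X mu -> iid_omega0 P sigma (fun j : 'I_n => X j).
Proof.
move=> law1 mX iidX; have mu1 := law_of_iid_sum_setT law1.
split => [j|j C mC|]; [exact: mX| |exact: (iid_law_mutual_indep P iidX mu1)].
by rewrite (iid_law_marginal P iidX mu1) // (law_of_iid_sum1 law1).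
Qed.

Lemma iid_law_children {sigma : R} {m n} {K : R.-ker R ~> (R * R)%type} {mu mu'}
    {X Y : nat -> T -> R} :
  is_split_cond_distr sigma m (fun a B => K a B) ->
  law_of_iid_sum sigma (m + m) mu -> law_of_iid_sum sigma m mu' ->
  (forall j : 'I_n, measurable_fun setT (X j)) -> iid_law P n X mu ->
  (forall B : 'I_n -> set (R * R), (forall j, measurable (B j)) ->
     P (\bigcap_(j : 'I_n) ((fun t => (Y j.*2 t, Y j.*2.+1 t)) @^-1` B j)) =
     \int[P]_t \prod_(j < n) K (X j t) (B j)) ->
  iid_law P n.*2 Y mu'.
Proof.
move=> split_K lawmu lawmu' mX iidX condY B mB.
have mu1 := law_of_iid_sum_setT lawmu.
rewrite (bigcap_preimage_pairs Y B n) condY => [|j]; last exact: measurableX.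
rewrite (ge0_integral_indep_prod P _ (fun j : 'I_n => X j) mX (iid_law_mutual_indep P iidX mu1)
  (fun j a => K a (B j.*2 `*` B j.*2.+1))) => [|j|j a]; last 2 first.
- exact: measurable_kernel (measurableX (mB _) (mB _)).
- exact: measure_ge0.
rewrite big_nat_double big_mkord; apply: eq_bigr => j _.
exact: (integral_split_cond_distr split_K lawmu lawmu' (mX j) (iid_law_marginal P iidX mu1 j)).
Qed.

End iid_law_levels.

Section partial_sums.
Context {R : realType}.

Definition partial_sums {n} (v : n.-tuple R) : n.+1.-tuple R :=
  [tuple \sum_(i < n | (i < x)%N) tnth v i | x < n.+1].

Lemma measurable_partial_sums n : measurable_fun setT (@partial_sums n).
Proof.
apply/measurable_fun_tnthP => x.
rewrite (_ : (@tnth n.+1 R)^~ x \o partial_sums =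
    fun v => \sum_(i < n) if (i < x)%N then tnth v i else 0).
  by apply: measurable_sum => i; case: (i < x)%N; [exact: measurable_tnth|exact: measurable_cst].
by apply: funext => v /=; rewrite tnth_mktuple big_mkcond.
Qed.

Lemma partial_sums_vec_widen {T : Type} n m (F : nat -> T -> R) : (n <= m)%N ->
  (fun t => [tuple \sum_(i < m | (i < x)%N) F i t | x < n.+1]) =
  partial_sums \o vec (fun i : 'I_n => F i).
Proof.
move=> nm; apply: funext => t; apply: eq_from_tnth => x /=; rewrite !tnth_mktuple.
under [RHS]eq_bigr do rewrite tnth_mktuple.
have xn : (x <= n)%N by rewrite -ltnS.
rewrite -(big_mkord (fun i => i < x)%N (F ^~ t)) -(big_mkord (fun i => i < x)%N (F ^~ t)).
have prefix k : (x <= k)%N -> \sum_(0 <= i < k | (i < x)%N) F i t = \sum_(0 <= i < x) F i t.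
  by move=> xk; rewrite (big_nat_widen 0 x k xpredT).
by rewrite !prefix // (leq_trans xn nm).
Qed.

Lemma partial_sums_vec_dotN {T : Type} n (X : 'I_n -> T -> R) :
  (fun t => [tuple dotN (X ^~ t) (pi1 n x) | x < n.+1]) = partial_sums \o vec X.
Proof.
apply: funext => t; apply: eq_from_tnth => x /=; rewrite !tnth_mktuple.
rewrite /dotN /pi1 [RHS]big_mkcond; apply: eq_bigr => i _.
by rewrite tnth_mktuple; case: ifP => _; rewrite ?mulr1 ?mulr0.
Qed.

End partial_sums.

Section binary_tree.
Context {R : realType} {sigma : R} {h : nat} {d} {T : measurableType d}
  {P : probability T R} {K : nat -> R.-pker R ~> (R * R)%type} {alpha : nat -> T -> R}.
Local Open Scope ereal_scope.

Hypothesis malpha : forall k, (0 < k < 2 ^ h.+1)%N -> measurable_fun setT (alpha k).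
Hypothesis law_root : law_of_iid_sum sigma (2 ^ h) (fun C => P (alpha 1%N @^-1` C)).
Hypothesis split_K : forall l, (l < h)%N ->
  is_split_cond_distr sigma (2 ^ (h - l.+1)) (fun a B => K l a B).
Hypothesis children_cond : forall l, (l < h)%N ->
  forall B : 'I_(2 ^ l) -> set (R * R), (forall j, measurable (B j)) ->
  P (\bigcap_(j : 'I_(2 ^ l))
       ((fun t => (alpha (2 * (2 ^ l + j))%N t, alpha (2 * (2 ^ l + j)).+1 t)) @^-1` B j))
  = \int[P]_t \prod_(j < 2 ^ l) K l (alpha (2 ^ l + j)%N t) (B j).

Lemma measurable_tree_node l (j : 'I_(2 ^ l)) :
  (l <= h)%N -> measurable_fun setT (alpha (2 ^ l + j)%N).
Proof.
move=> lh; apply: malpha; have := ltn_ord j.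
have : (2 ^ l <= 2 ^ h)%N by rewrite leq_pexp2l.
by rewrite expnS; lia.
Qed.

Lemma tree_level_iid l : (l <= h)%N -> exists mu,
  law_of_iid_sum sigma (2 ^ (h - l)) mu /\ iid_law P (2 ^ l) (fun j => alpha (2 ^ l + j)%N) mu.
Proof.
elim: l => [_|l IHl lh].
  by exists (fun C => P (alpha 1%N @^-1` C)); split; [rewrite subn0|exact: iid_law1].
have [mu [lawmu iidmu]] := IHl (ltnW lh).
have [mu' lawmu'] := split_cond_distr_half_law (split_K l lh).
exists mu'; split => //.
rewrite expnS mul2n.
apply: (iid_law_children (K := K l) P (split_K l lh) _ lawmu' _ iidmu).
- by rewrite addnn -mul2n -expnS subnSK.
- by move=> j; apply: measurable_tree_node; exact: ltnW.
- move=> B mB; rewrite -(children_cond l lh) //; congr (P _); apply: eq_bigcapr => j _.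
  rewrite (_ : (2 ^ l).*2 + j.*2 = 2 * (2 ^ l + j))%N; last lia.
  by rewrite (_ : (2 ^ l).*2 + j.*2.+1 = (2 * (2 ^ l + j)).+1)%N; last lia.
Qed.

End binary_tree.

Theorem lemmaF4 (R : realType) (sigma : R) (N h : nat)
    (d : measure_display) (T : measurableType d) (P : probability T R)
    (d' : measure_display) (T' : measurableType d') (Q : probability T' R)
    (K : nat -> R.-pker R ~> (R * R)%type)
    (alpha : nat -> T -> R) (omega : 'I_N -> T' -> R) :
  sigma != 0 ->
  (N <= 2 ^ h)%N ->
  (forall h' : nat, (N <= 2 ^ h')%N -> (h <= h')%N) ->
  (forall k : nat, (0 < k < 2 ^ h.+1)%N -> measurable_fun [set: T] (alpha k)) ->
  law_of_iid_sum sigma (2 ^ h) (fun B => P (alpha 1%N @^-1` B)) ->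
  (forall l : nat, (l < h)%N -> is_split_cond_distr sigma (2 ^ (h - l.+1)) (fun a B => K l a B)) ->
  (forall l : nat, (l < h)%N ->
     forall (A : set ((2 ^ l.+1 - 1).-tuple R)) (B : 'I_(2 ^ l) -> set (R * R)%type),
       measurable A -> (forall j, measurable (B j)) ->
       P (tree_prefix alpha l @^-1` A `&`
          \bigcap_(j : 'I_(2 ^ l))
             ((fun t => (alpha (2 * (2 ^ l + j))%N t, alpha (2 * (2 ^ l + j)).+1 t))
                @^-1` B j))
       = (\int[P]_(t in tree_prefix alpha l @^-1` A)
            \prod_(j < 2 ^ l) K l (alpha (2 ^ l + j)%N t) (B j))%E) ->
  iid_omega0 Q sigma omega ->
  forall A : set (N.+1.-tuple R), measurable A ->
    P ((fun t => [tuple \sum_(i < 2 ^ h | (i < x)%N) alpha (2 ^ h + i)%N t | x < N.+1])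
         @^-1` A)
    = Q ((fun t => [tuple dotN (fun i => omega i t) (pi1 N x) | x < N.+1]) @^-1` A).
Proof.
(* The argument works for every sigma and every depth h with N <= 2^h. *)
move=> _ hN _ malpha law_root split_K cond iidQ A mA.
have children l : (l < h)%N -> forall B : 'I_(2 ^ l) -> set (R * R)%type,
    (forall j, measurable (B j)) ->
    P (\bigcap_(j : 'I_(2 ^ l))
         ((fun t => (alpha (2 * (2 ^ l + j))%N t, alpha (2 * (2 ^ l + j)).+1 t)) @^-1` B j))
    = (\int[P]_t \prod_(j < 2 ^ l) K l (alpha (2 ^ l + j)%N t) (B j))%E.
  by move=> lh B mB; have := cond l lh setT B measurableT mB; rewrite preimage_setT setTI.
have [mu [law_leaf iid_leaf]] := tree_level_iid malpha law_root split_K children h (leqnn h).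
rewrite subnn expn0 in law_leaf.
have iid_leaves : iid_omega0 P sigma (fun i : 'I_N => alpha (2 ^ h + i)%N).
  apply: (iid_law_iid_omega0 (X := fun k => alpha (2 ^ h + k)%N) P law_leaf) => [i|].
    exact: (measurable_tree_node malpha h (Ordinal (leq_trans (ltn_ord i) hN)) (leqnn h)).
  exact: (iid_law_prefix P iid_leaf (law_of_iid_sum_setT law_leaf) N hN).
rewrite (partial_sums_vec_widen _ _ (fun i => alpha (2 ^ h + i)%N) hN) partial_sums_vec_dotN.
have mA' := measurable_preimage_setT _ _ (measurable_partial_sums N) mA.
exact: (iid_omega0_vec_law P Q sigma _ _ iid_leaves iidQ _ mA').
Qed.
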